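(* Consider the system $$\frac{df}{dt}= r\alpha f m(1-f-m)-(1+h)f,\qquad \frac{dm}{dt}=(1-r)\alpha f m(1-f-m)+(s-1)m,$$ with $0<r<1$, $\alpha>0$, $h\ge 0$, $0\le s<1$. Set $\mu=\frac{(1-r)(1+h)}{r(1-s)}$ and define $$s^*=\frac{1}{r}+\frac{1-r}{4}\Big(\frac{4h}{r}-\alpha\Big),\qquad h_*=\frac{r}{4}\Big(\alpha-\frac{4}{r(1-r)}\Big),\qquad h^*=\frac{r}{4}\Big(\alpha-\frac{4}{r}\Big).$$ The interior equilibria of the system are $E_i^*=(f_i^*,\mu f_i^* )$, $i=1,2$, with $$f^*_{1,2}=\frac{1}{2(1+\mu)}\left\{1\pm\sqrt{1-\frac{4(1+\mu)(1+h)}{r\alpha\mu}}\right\},$$ and these interior equilibria exist (are real and positive) if either (i) $s\ge s^*$ and $h_*<h<h^*$, or (ii) $0\le h\le h_*$ and $\alpha>\frac{4}{r(1-r)}$.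
   Context: This is the nondimensionalized female-harvesting male-stocking (FHMS) mating model without Allee effect: $f,m\ge 0$ are scaled female and male population densities, $r$ is the primary sex ratio, $\alpha$ the scaled reproduction rate, $h$ the scaled female harvesting rate and $s$ the scaled male stocking rate. An interior equilibrium is an equilibrium with $f>0$, $m>0$. *)

From Stdlib Require Import Reals Lra.
Open Scope R_scope.

Definition fhms_df (r alpha h s f m : R) : R :=
  r * alpha * f * m * (1 - f - m) - (1 + h) * f.
Definition fhms_dm (r alpha h s f m : R) : R :=
  (1 - r) * alpha * f * m * (1 - f - m) + (s - 1) * m.

Definition is_equilibrium (r alpha h s f m : R) : Prop :=
  fhms_df r alpha h s f m = 0 /\ fhms_dm r alpha h s f m = 0.

Definition is_interior_equilibrium (r alpha h s f m : R) : Prop :=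
  0 < f /\ 0 < m /\ is_equilibrium r alpha h s f m.

Definition fhms_mu (r h s : R) : R := (1 - r) * (1 + h) / (r * (1 - s)).
Definition s_star (r alpha h : R) : R := 1 / r + (1 - r) / 4 * (4 * h / r - alpha).
Definition h_low (r alpha : R) : R := r / 4 * (alpha - 4 / (r * (1 - r))).
Definition h_up (r alpha : R) : R := r / 4 * (alpha - 4 / r).

Definition fhms_disc (r alpha h s : R) : R :=
  1 - 4 * (1 + fhms_mu r h s) * (1 + h) / (r * alpha * fhms_mu r h s).

Definition f_star1 (r alpha h s : R) : R :=
  / (2 * (1 + fhms_mu r h s)) * (1 + sqrt (fhms_disc r alpha h s)).
Definition f_star2 (r alpha h s : R) : R :=
  / (2 * (1 + fhms_mu r h s)) * (1 - sqrt (fhms_disc r alpha h s)).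

(* At an interior equilibrium both right-hand sides vanish with f, m > 0, so
   dividing by f and by m gives
       r alpha m (1 - f - m) = 1 + h   and   (1 - r) alpha f (1 - f - m) = 1 - s.
   Comparing the two forces m = mu f with mu = (1-r)(1+h) / (r(1-s)); on this
   ray the equilibrium condition is equivalent to the quadratic
       a k f^2 - a f + (1 + h) = 0,   a = r alpha mu,   k = 1 + mu,
   whose roots are the two points f_1^*, f_2^* of the statement.

   Condition (i)
   states this directly, and condition (ii) implies s_star <= 0 <= s. *)

From Stdlib Require Import Reals Lra.
Open Scope R_scope.

Section Quadratic.

(* The quadratic a k x^2 - a x + H with a, k > 0; its discriminant, divided
   by a^2, is 1 - 4 k H / a. *)
Variables a k H : R.
Hypothesis a_pos : 0 < a.
Hypothesis k_pos : 0 < k.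

Let D := 1 - 4 * k * H / a.

Lemma quad_complete_square (x : R) :
  a * k * x * x - a * x + H = a / (4 * k) * ((2 * k * x - 1) * (2 * k * x - 1) - D).
Proof. unfold D; field; lra. Qed.

Lemma quad_root_cases (x : R) :
  a * k * x * x - a * x + H = 0 ->
  0 <= D /\ (x = / (2 * k) * (1 + sqrt D) \/ x = / (2 * k) * (1 - sqrt D)).
Proof.
  intros Hroot.
  set (c := 2 * k * x - 1).
  assert (HD : D = c * c).
  { rewrite quad_complete_square in Hroot.
    assert (Hc : 0 < a / (4 * k)) by (apply Rdiv_lt_0_compat; lra).
    apply Rmult_integral in Hroot as [Hz | Hz]; [lra | unfold c; lra]. }
  split; [rewrite HD; nra |].
  rewrite HD, <- Rsqr_def, sqrt_Rsqr_abs.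
  unfold Rabs; destruct (Rcase_abs c); [right | left]; unfold c; field; lra.
Qed.

Lemma quad_roots_solve (x : R) : 0 <= D ->
  (x = / (2 * k) * (1 + sqrt D) \/ x = / (2 * k) * (1 - sqrt D)) ->
  a * k * x * x - a * x + H = 0.
Proof.
  intros HD Hx.
  assert (Hsq : sqrt D * sqrt D = D) by (apply sqrt_sqrt; exact HD).
  rewrite quad_complete_square.
  replace ((2 * k * x - 1) * (2 * k * x - 1)) with (sqrt D * sqrt D);
    [rewrite Hsq; ring |].
  destruct Hx as [-> | ->]; field; lra.
Qed.

(* With a positive constant term H, both roots are positive: D < 1, so
   sqrt D < 1. *)
Lemma quad_roots_pos : 0 < H -> 0 <= D ->
  0 < / (2 * k) * (1 + sqrt D) /\ 0 < / (2 * k) * (1 - sqrt D).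
Proof.
  intros HH HD.
  assert (HD1 : D < 1).
  { assert (0 < 4 * k * H / a) by (apply Rdiv_lt_0_compat; nra). unfold D; lra. }
  assert (Hs0 : 0 <= sqrt D) by apply sqrt_pos.
  assert (Hs1 : sqrt D < 1) by (rewrite <- sqrt_1; apply sqrt_lt_1; lra).
  assert (Hinv : 0 < / (2 * k)) by (apply Rinv_0_lt_compat; lra).
  split; apply Rmult_lt_0_compat; lra.
Qed.

End Quadratic.

Section Equilibria.

Variables r alpha h s : R.
Hypothesis r_pos : 0 < r.
Hypothesis r_lt1 : r < 1.
Hypothesis alpha_pos : 0 < alpha.
Hypothesis h_nonneg : 0 <= h.
Hypothesis s_lt1 : s < 1.

Let mu := fhms_mu r h s.

Lemma mu_pos : 0 < mu.
Proof. apply Rdiv_lt_0_compat; apply Rmult_lt_0_compat; lra. Qed.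

Lemma mu_spec : mu * (r * (1 - s)) = (1 - r) * (1 + h).
Proof. unfold mu, fhms_mu; field; lra. Qed.

Lemma interior_equilibrium_on_ray (f m : R) :
  is_interior_equilibrium r alpha h s f m ->
  m = mu * f /\
  r * alpha * mu * (1 + mu) * f * f - r * alpha * mu * f + (1 + h) = 0.
Proof.
  intros [Hf [Hm [Edf Edm]]]; unfold fhms_df in Edf; unfold fhms_dm in Edm.
  assert (Hfem : r * alpha * m * (1 - f - m) = 1 + h).
  { apply (Rmult_eq_reg_l f); lra. }
  assert (Hmal : (1 - r) * alpha * f * (1 - f - m) = 1 - s).
  { apply (Rmult_eq_reg_l m); lra. }
  assert (Hray : m = mu * f).
  { apply (Rmult_eq_reg_l (r * (1 - s))); [| nra].
    transitivity (r * m * ((1 - r) * alpha * f * (1 - f - m))); [rewrite Hmal; ring |].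
    transitivity ((1 - r) * f * (r * alpha * m * (1 - f - m))); [ring |].
    rewrite Hfem.
    transitivity (f * ((1 - r) * (1 + h))); [ring |].
    rewrite <- mu_spec; ring. }
  split; [exact Hray |].
  subst m; rewrite <- Hfem; ring.
Qed.

(* Conversely, every root f of that quadratic gives an equilibrium (f, mu f):
   the female equation is the quadratic times -f, and the male equation
   follows from it by the defining relation of mu. *)
Lemma ray_root_equilibrium (f : R) :
  r * alpha * mu * (1 + mu) * f * f - r * alpha * mu * f + (1 + h) = 0 ->
  is_equilibrium r alpha h s f (mu * f).
Proof.
  intros Hq; unfold is_equilibrium, fhms_df, fhms_dm.
  assert (Hfem : r * alpha * mu * f * (1 - (1 + mu) * f) = 1 + h) by lra.
  assert (Hmal : (1 - r) * alpha * f * (1 - (1 + mu) * f) = 1 - s).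
  { apply (Rmult_eq_reg_l (mu * r)); [| pose proof mu_pos; nra].
    transitivity ((1 - r) * (r * alpha * mu * f * (1 - (1 + mu) * f))); [ring |].
    rewrite Hfem, <- mu_spec; ring. }
  split.
  - transitivity (- f * (r * alpha * mu * (1 + mu) * f * f - r * alpha * mu * f + (1 + h)));
      [ring | rewrite Hq; ring].
  - transitivity (mu * f * ((1 - r) * alpha * f * (1 - (1 + mu) * f) - (1 - s)));
      [ring | rewrite Hmal; ring].
Qed.

Lemma fhms_disc_scaled :
  fhms_disc r alpha h s * (r * alpha * mu) * (1 - s) =
  4 * (1 + h) * (s - s_star r alpha h).
Proof.
  pose proof mu_pos as Hmu.
  unfold fhms_disc, s_star; fold mu.
  transitivity (alpha * (mu * (r * (1 - s))) - 4 * (1 + h) * (1 - s)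
                - 4 * (1 + h) * (mu * (r * (1 - s))) / r);
    [field; repeat split; lra |].
  rewrite mu_spec; field; lra.
Qed.

Lemma fhms_disc_nonneg : s_star r alpha h <= s -> 0 <= fhms_disc r alpha h s.
Proof.
  intros Hs.
  assert (Hscale : 0 < r * alpha * mu * (1 - s)).
  { pose proof mu_pos; apply Rmult_lt_0_compat; [| lra].
    apply Rmult_lt_0_compat; [| lra]; apply Rmult_lt_0_compat; lra. }
  pose proof fhms_disc_scaled as Hid.
  destruct (Rle_or_lt 0 (fhms_disc r alpha h s)) as [| Hneg]; [assumption |].
  nra.
Qed.

End Equilibria.

(* Below the lower threshold h_low, the critical stocking rate s_star is <= 0,
   so condition (ii) is a special case of s >= s_star. *)
Lemma s_star_nonpos_below_h_low (r alpha h : R) :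
  0 < r -> r < 1 -> h <= h_low r alpha -> s_star r alpha h <= 0.
Proof.
  intros Hr0 Hr1 Hh.
  assert (Hid : s_star r alpha h = (1 - r) / r * (h - h_low r alpha)).
  { unfold s_star, h_low; field; lra. }
  rewrite Hid.
  assert (0 < (1 - r) / r) by (apply Rdiv_lt_0_compat; lra).
  nra.
Qed.

Theorem mainTheorem1 (r alpha h s : R)
  (hr0 : 0 < r) (hr1 : r < 1) (ha : 0 < alpha) (hh : 0 <= h)
  (hs0 : 0 <= s) (hs1 : s < 1) :
  (* every interior equilibrium is one of E_1^*, E_2^* *)
  (forall f m, is_interior_equilibrium r alpha h s f m ->
     0 <= fhms_disc r alpha h s /\
     m = fhms_mu r h s * f /\ (f = f_star1 r alpha h s \/ f = f_star2 r alpha h s)) /\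
  (* existence (real and positive) under (i) or (ii) *)
  ((s_star r alpha h <= s /\ h_low r alpha < h /\ h < h_up r alpha) \/
   (h <= h_low r alpha /\ 4 / (r * (1 - r)) < alpha) ->
     0 <= fhms_disc r alpha h s /\
     is_interior_equilibrium r alpha h s (f_star1 r alpha h s) (fhms_mu r h s * f_star1 r alpha h s) /\
     is_interior_equilibrium r alpha h s (f_star2 r alpha h s) (fhms_mu r h s * f_star2 r alpha h s)).
Proof.
  pose proof (mu_pos r h s hr0 hr1 hh hs1) as Hmu.
  assert (Ha : 0 < r * alpha * fhms_mu r h s).
  { apply Rmult_lt_0_compat; [apply Rmult_lt_0_compat |]; lra. }
  assert (Hk : 0 < 1 + fhms_mu r h s) by lra.
  split.
  - intros f m Heq.
    destruct (interior_equilibrium_on_ray r alpha h s hr0 hs1 f m Heq) as [Hray Hq].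
    destruct (quad_root_cases _ _ _ Ha Hk f Hq) as [HD Hf].
    repeat split; assumption.
  - intros Hcond.
    assert (Hs : s_star r alpha h <= s).
    { destruct Hcond as [[Hs _] | [Hh _]]; [exact Hs |].
      pose proof (s_star_nonpos_below_h_low r alpha h hr0 hr1 Hh); lra. }
    pose proof (fhms_disc_nonneg r alpha h s hr0 hr1 ha hh hs1 Hs) as HD.
    destruct (quad_roots_pos _ _ (1 + h) Ha Hk ltac:(lra) HD) as [Hf1 Hf2].
    assert (Hequil : forall f, f = f_star1 r alpha h s \/ f = f_star2 r alpha h s ->
              0 < f -> is_interior_equilibrium r alpha h s f (fhms_mu r h s * f)).
    { intros f Hf Hfpos; split; [exact Hfpos | split; [apply Rmult_lt_0_compat; lra |]].
      apply (ray_root_equilibrium r alpha h s hr0 hr1 hh hs1).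
      exact (quad_roots_solve _ _ _ Ha Hk f HD Hf). }
    split; [exact HD |].
    split; apply Hequil; auto.
Qed.
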